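(* Let $\mathbf a=(a_1,\dots,a_m)$ and $\mathbf e=(e_1,\dots,e_{m-1})$ be partitions such that $\mathbf a\prec'\mathbf e$ and $\sum_{i=1}^{m-1}e_i\le\sum_{i=1}^m a_i$. Let $\theta=\#\{i: e_i>0\}$ and $\bar\theta=\#\{i: a_i>0\}$. Then $\bar\theta\ge\theta$.
   Context: A partition is a nonincreasing finite sequence of nonnegative integers. 1-step generalized majorization: for nonincreasing integer sequences $\mathbf a=(a_1,\dots,a_m)$ and $\mathbf e=(e_1,\dots,e_{m-1})$, set $e_m=-\infty$ and $h=\min\{i: e_i<a_i\}$; then $\mathbf a\prec'\mathbf e$ means $e_i=a_{i+1}$ for all $h\le i\le m-1$. *)

From mathcomp Require Import all_boot.

Definition is_partition (s : seq nat) : bool := sorted geq s.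

(* 1-step generalized majorization  a <' e, for a of length m >= 1 and
   e of length m-1, with the convention e_m = -oo.  Indices are 0-based:
   position i here is position i+1 in the paper. *)
Definition e_lt_a (a e : seq nat) (i : nat) : bool :=
  (i == (size a).-1) || (nth 0 e i < nth 0 a i).

(* h (0-based) = min { i < m : e_i < a_i }, always exists since e_{m} = -oo *)
Definition maj_h (a e : seq nat) : nat := find (e_lt_a a e) (iota 0 (size a)).

Definition gen_maj1 (a e : seq nat) : Prop :=
  forall i, maj_h a e <= i -> i < (size a).-1 -> nth 0 e i = nth 0 a i.+1.

Definition num_pos (s : seq nat) : nat := count (fun x => 0 < x) s.

(** A nonincreasing sequence [s] has [num_pos s <= k] exactly when its [k]-th
    entry vanishes, so with [t = num_pos a] it suffices to show [e_t = 0]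
    (when [t < m - 1]).  If [h <= t] this is [e_t = a_(t+1) = 0].  Otherwise
    [a_h = 0]; the tails [e_h, e_(h+1), ...] and [a_(h+1), a_(h+2), ...] coincide,
    so [sum e <= sum a] bounds the prefix sum of [e] below [h] by that of [a],
    while minimality of [h] gives [a_i <= e_i] there: both prefixes agree, and
    [e_t = a_t = 0]. *)

From mathcomp Require Import all_boot.
From mathcomp Require Import zify.

Lemma num_pos_leq_nth (s : seq nat) (k : nat) :
  sorted geq s -> (num_pos s <= k) = (nth 0 s k == 0).
Proof.
elim: s k => [|x s IHs] k /=; first by rewrite nth_nil.
move=> sorted_xs; have sorted_s := path_sorted sorted_xs.
case: x sorted_xs => [|x] sorted_xs.
  have s_0 : all (geq 0) s by apply: order_path_min sorted_xs => ? ? ? /=; lia.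
  have -> : num_pos s = 0.
    rewrite /num_pos (eq_in_count (a2 := pred0)) ?count_pred0 //.
    by move=> [|y] // /(allP s_0).
  case: k => [|k] //=; apply/esym/eqP.
  have [k_lt | k_ge] := ltnP k (size s); last by rewrite nth_default.
  by move: (allP s_0 _ (mem_nth 0 k_lt)); case: nth.
by case: k => [|k] //=; rewrite /num_pos /= add1n ltnS -IHs.
Qed.

Lemma leq_sumn_nth (s u : seq nat) :
  size s = size u -> (forall i, i < size s -> nth 0 s i <= nth 0 u i) ->
  sumn s <= sumn u.
Proof.
elim: s u => [|x s IHs] [|y u] //= [size_su] le_su.
by apply: leq_add; [apply: (le_su 0) | apply: IHs => // i; apply: (le_su i.+1)].
Qed.

Lemma eq_from_leq_nth_sumn (s u : seq nat) :
  size s = size u -> (forall i, i < size s -> nth 0 s i <= nth 0 u i) ->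
  sumn u <= sumn s -> s = u.
Proof.
elim: s u => [|x s IHs] [|y u] //= [size_su] le_su sum_us.
have le_tail i : i < size s -> nth 0 s i <= nth 0 u i by apply: (le_su i.+1).
have := le_su 0 isT; have := leq_sumn_nth _ _ size_su le_tail => /= le_sumn le_xy.
have x_y : x = y by lia.
by rewrite x_y (IHs u size_su le_tail) //; lia.
Qed.

Section GeneralizedMajorization.

Variables a e : seq nat.
Hypothesis size_e : size e = (size a).-1.

Local Notation h := (maj_h a e).

Lemma maj_h_leq : 0 < size a -> h <= (size a).-1.
Proof.
move=> a_gt0; rewrite leqNgt; apply/negP => /(before_find 0).
by rewrite nth_iota ?prednK // /e_lt_a eqxx.
Qed.

Lemma leq_nth_before_maj_h i : i < h -> nth 0 a i <= nth 0 e i.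
Proof.
move=> lt_ih; have i_lt : i < size a.
  by apply: leq_trans lt_ih _; rewrite -[size a](size_iota 0) find_size.
by have := before_find 0 lt_ih; rewrite nth_iota // /e_lt_a add0n => /norP[_]; rewrite -leqNgt.
Qed.

Hypothesis a_maj_e : gen_maj1 a e.

Lemma drop_maj_h : drop h e = drop h.+1 a.
Proof.
apply: (@eq_from_nth _ 0); first by rewrite !size_drop size_e; lia.
move=> i; rewrite size_drop size_e => i_lt.
by rewrite !nth_drop a_maj_e ?addSn //; lia.
Qed.

Lemma take_maj_h : 0 < size a -> sumn e <= sumn a -> nth 0 a h = 0 ->
  take h e = take h a.
Proof.
move=> a_gt0 sum_ea a_h0; have h_le := maj_h_leq a_gt0.
apply/esym/eq_from_leq_nth_sumn.
- by rewrite !size_takel ?size_e //; lia.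
- move=> i; rewrite size_takel; last by lia.
  by move=> lt_ih; rewrite !nth_take // leq_nth_before_maj_h.
have sumn_split s : sumn s = sumn (take h s) + sumn (drop h s).
  by rewrite -sumn_cat cat_take_drop.
move: sum_ea; rewrite (sumn_split e) (sumn_split a).
by rewrite drop_maj_h (drop_nth 0 (_ : h < size a)) /= ?a_h0 ?leq_add2r //; lia.
Qed.

End GeneralizedMajorization.

Theorem lemma5p5 (a e : seq nat) :
  0 < size a ->
  size e = (size a).-1 ->
  is_partition a -> is_partition e ->
  gen_maj1 a e ->
  sumn e <= sumn a ->
  num_pos e <= num_pos a.
Proof.
move=> a_gt0 size_e part_a part_e a_maj_e sum_ea.
set t := num_pos a.
have a_0 j : t <= j -> nth 0 a j = 0 by rewrite num_pos_leq_nth // => /eqP.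
have [le_mt | lt_tm] := leqP (size a).-1 t.
  by rewrite -size_e in le_mt; apply: leq_trans le_mt; apply: count_size.
rewrite num_pos_leq_nth //; apply/eqP.
have [le_ht | lt_th] := leqP (maj_h a e) t; first by rewrite a_maj_e // a_0.
rewrite -(nth_take 0 lt_th) take_maj_h ?nth_take ?a_0 //; lia.
Qed.
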